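(* Let $P$ be a program and $D$ a conjunction of disequations. Then $D$ succeeds in $P$ iff every ground instance of $D$ holds.
   Context: There are infinite, pairwise disjoint sets of variables, function symbols (with arities) and predicate symbols. Predicate symbols $\mathit{true}$, $=$, $\neq$ are basic, others non-basic. A disequation is an atom $t_1\neq t_2$ with $t_1,t_2$ terms. A goal is a conjunction of atoms ('','' associative, neutral element $\mathit{true}$); a clause is $A\leftarrow G$ with $A$ non-basic; a program is a set of clauses. Operational semantics for program $P$: (1) $(t_1=t_2,G)\longmapsto_P G\vartheta$ if $t_1,t_2$ unify with mgu $\vartheta$; (2) $(t_1\neq t_2,G)\longmapsto_P G$ if $t_1,t_2$ are not unifiable; (3) $(A,G)\longmapsto_P(bd(C),G)\vartheta$ for $A$ non-basic, $C$ a renamed apart clause of $P$, $\vartheta$ an mgu of $A$ and the head of $C$. A goal succeeds in $P$ iff there is a derivation from it to $\mathit{true}$. A ground conjunction of disequations holds iff each of its disequations $t_1\neq t_2$ relates two distinct ground terms (the empty conjunction $\mathit{true}$ holds). *)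

From Stdlib Require Import List.
Import ListNotations.

(* Function symbols are pairs (name, arity): a term [Fn f args] uses the
   function symbol with name [f] and arity [length args]; hence for every
   arity there are infinitely many function symbols (constants included). *)
Inductive term : Type :=
| Var : nat -> term
| Fn  : nat -> list term -> term.

(* Atoms: the basic predicates [=] and [<>] and non-basic predicate atoms
   [Pred p args] (predicate symbol = (name p, arity length args)).
   The basic atom [true] is the neutral element of conjunction, so it is
   represented by the empty goal and not as a separate atom. *)
Inductive atom : Type :=
| Eq   : term -> term -> atom
| Neq  : term -> term -> atom
| Pred : nat -> list term -> atom.

Definition goal := list atom.

Record clause := Clause { head_pred : nat; head_args : list term; body : goal }.
Definition head (C : clause) : atom := Pred (head_pred C) (head_args C).
Definition bd (C : clause) : goal := body C.

Definition program := clause -> Prop.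

Definition subst := nat -> term.

Fixpoint tsubst (s : subst) (t : term) : term :=
  match t with
  | Var x => s x
  | Fn f l => Fn f (map (tsubst s) l)
  end.

Definition asubst (s : subst) (a : atom) : atom :=
  match a with
  | Eq t u => Eq (tsubst s t) (tsubst s u)
  | Neq t u => Neq (tsubst s t) (tsubst s u)
  | Pred p l => Pred p (map (tsubst s) l)
  end.

Definition gsubst (s : subst) (g : goal) : goal := map (asubst s) g.

Definition csubst (s : subst) (C : clause) : clause :=
  Clause (head_pred C) (map (tsubst s) (head_args C)) (gsubst s (body C)).

Fixpoint occurs (x : nat) (t : term) : Prop :=
  match t with
  | Var y => x = y
  | Fn _ l => (fix go (l : list term) : Prop :=
                 match l with
                 | [] => False
                 | u :: l' => occurs x u \/ go l'
                 end) l
  end.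

Definition aoccurs (x : nat) (a : atom) : Prop :=
  match a with
  | Eq t u | Neq t u => occurs x t \/ occurs x u
  | Pred _ l => exists t, In t l /\ occurs x t
  end.

Definition goccurs (x : nat) (g : goal) : Prop := exists a, In a g /\ aoccurs x a.

Definition coccurs (x : nat) (C : clause) : Prop :=
  aoccurs x (head C) \/ goccurs x (body C).

Definition ground (t : term) : Prop := forall x, ~ occurs x t.

Definition more_general (th tau : subst) : Prop :=
  exists rho : subst, forall x, tsubst rho (th x) = tau x.

Definition unifier_t (th : subst) (t1 t2 : term) : Prop := tsubst th t1 = tsubst th t2.
Definition unifiable (t1 t2 : term) : Prop := exists th, unifier_t th t1 t2.
Definition mgu_t (th : subst) (t1 t2 : term) : Prop :=
  unifier_t th t1 t2 /\ forall tau, unifier_t tau t1 t2 -> more_general th tau.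

Definition unifier_a (th : subst) (a1 a2 : atom) : Prop := asubst th a1 = asubst th a2.
Definition mgu_a (th : subst) (a1 a2 : atom) : Prop :=
  unifier_a th a1 a2 /\ forall tau, unifier_a tau a1 a2 -> more_general th tau.

Definition renaming (r : nat -> nat) : Prop :=
  (forall x y, r x = r y -> x = y) /\ (forall y, exists x, r x = y).

Definition renamed_apart_clause (P : program) (g : goal) (C : clause) : Prop :=
  exists C0 r, P C0 /\ renaming r /\ C = csubst (fun x => Var (r x)) C0 /\
               forall x, coccurs x C -> ~ goccurs x g.

(* One derivation step (the leftmost atom is selected). *)
Inductive step (P : program) : goal -> goal -> Prop :=
| step_eq : forall t1 t2 G th,
    mgu_t th t1 t2 -> step P (Eq t1 t2 :: G) (gsubst th G)
| step_neq : forall t1 t2 G,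
    ~ unifiable t1 t2 -> step P (Neq t1 t2 :: G) G
| step_pred : forall p l G C th,
    renamed_apart_clause P (Pred p l :: G) C ->
    mgu_a th (Pred p l) (head C) ->
    step P (Pred p l :: G) (gsubst th (bd C ++ G)).

Inductive derives (P : program) : goal -> goal -> Prop :=
| derives_refl : forall G, derives P G G
| derives_step : forall G1 G2 G3, step P G1 G2 -> derives P G2 G3 -> derives P G1 G3.

Definition succeeds (P : program) (G : goal) : Prop := derives P G [].

(* Conjunctions of disequations, given as lists of pairs (t1, t2) meaning t1 <> t2. *)
Definition diseqs := list (term * term).

Definition diseq_goal (D : diseqs) : goal := map (fun p => Neq (fst p) (snd p)) D.

Definition dsubst (s : subst) (D : diseqs) : diseqs :=
  map (fun p => (tsubst s (fst p), tsubst s (snd p))) D.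

Definition ground_diseqs (D : diseqs) : Prop :=
  forall p, In p D -> ground (fst p) /\ ground (snd p).

Definition holds (D : diseqs) : Prop :=
  forall p, In p D -> fst p <> snd p.

Definition ground_instance (D' D : diseqs) : Prop :=
  exists s, D' = dsubst s D /\ ground_diseqs D'.

(** A goal made of disequations can only be rewritten by rule (2), whatever the
    program, so it succeeds iff none of its disequations is unifiable.  A
    ground instance violating [t1 <> t2] is given by a unifier of [t1] and [t2];
    conversely, composing a unifier with the substitution sending every variable
    to a constant yields a ground unifier, hence a ground instance that fails. *)

From Stdlib Require Import List.
Import ListNotations.

Section TermNestedInd.

Variable Q : term -> Prop.
Hypothesis Q_Var : forall x, Q (Var x).
Hypothesis Q_Fn : forall f l, Forall Q l -> Q (Fn f l).

Fixpoint term_nested_ind (t : term) : Q t :=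
  match t with
  | Var x => Q_Var x
  | Fn f l => Q_Fn f l ((fix go (l : list term) : Forall Q l :=
                          match l with
                          | [] => Forall_nil _
                          | u :: l' => Forall_cons u (term_nested_ind u) (go l')
                          end) l)
  end.

End TermNestedInd.

Lemma tsubst_comp (s1 s2 : subst) (t : term) :
  tsubst s2 (tsubst s1 t) = tsubst (fun x => tsubst s2 (s1 x)) t.
Proof.
  induction t as [x | f l IHl] using term_nested_ind; simpl; auto.
  f_equal. rewrite map_map.
  induction IHl; simpl; f_equal; auto.
Qed.

Lemma occurs_Fn (x f : nat) (l : list term) :
  occurs x (Fn f l) <-> exists t, In t l /\ occurs x t.
Proof.
  induction l as [|u l IH]; simpl.
  - split; [tauto | intros [t [[] _]]].
  - change ((fix go (l : list term) : Prop :=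
               match l with [] => False | u :: l' => occurs x u \/ go l' end) l)
      with (occurs x (Fn f l)).
    rewrite IH. firstorder congruence.
Qed.

Lemma ground_tsubst (s : subst) (t : term) :
  (forall y, ground (s y)) -> ground (tsubst s t).
Proof.
  intros Hs.
  induction t as [y | f l IHl] using term_nested_ind; simpl; auto.
  intros x Hx. apply occurs_Fn in Hx as [u [Hu Hxu]].
  apply in_map_iff in Hu as [t [<- Ht]].
  rewrite Forall_forall in IHl. exact (IHl t Ht x Hxu).
Qed.

Lemma unifiable_ground_unifier (t1 t2 : term) :
  unifiable t1 t2 -> exists s, (forall y, ground (s y)) /\ unifier_t s t1 t2.
Proof.
  intros [th Hth].
  exists (fun y => tsubst (fun _ => Fn 0 []) (th y)). split.
  - intros y. apply ground_tsubst. intros z x. simpl. tauto.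
  - unfold unifier_t in *. rewrite <- !tsubst_comp, Hth. reflexivity.
Qed.

Lemma ground_dsubst (s : subst) (D : diseqs) :
  (forall y, ground (s y)) -> ground_diseqs (dsubst s D).
Proof.
  intros Hs p Hp. apply in_map_iff in Hp as [q [<- _]].
  split; apply ground_tsubst; exact Hs.
Qed.

Lemma succeeds_diseq_goal (P : program) (D : diseqs) :
  succeeds P (diseq_goal D) <-> (forall p, In p D -> ~ unifiable (fst p) (snd p)).
Proof.
  unfold succeeds. induction D as [|q D IH]; simpl.
  - split; [tauto | constructor].
  - split.
    + intros Hder. inversion Hder as [|? G ? Hstep Hrest]; subst.
      inversion Hstep; subst.
      intros p [<- | Hp]; [assumption | exact (proj1 IH Hrest p Hp)].
    + intros Hnu. eapply derives_step.
      * apply step_neq, Hnu. left; reflexivity.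
      * apply IH. intros p Hp. apply Hnu. right; exact Hp.
Qed.

Theorem lemma15 (P : program) (D : diseqs) :
  succeeds P (diseq_goal D) <-> (forall D', ground_instance D' D -> holds D').
Proof.
  rewrite succeeds_diseq_goal. split.
  - intros Hnu D' [s [-> _]] p Hp Heq.
    apply in_map_iff in Hp as [q [<- Hq]].
    apply (Hnu q Hq). exists s. exact Heq.
  - intros Hholds p Hp Hu.
    destruct (unifiable_ground_unifier _ _ Hu) as [s [Hs Hsu]].
    apply (Hholds (dsubst s D)) with (p := (tsubst s (fst p), tsubst s (snd p))).
    + exists s. split; [reflexivity | exact (ground_dsubst s D Hs)].
    + apply in_map_iff. exists p. split; [reflexivity | exact Hp].
    + exact Hsu.
Qed.
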